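(* Let $K$ be a field, $A=\{\alpha_1,\dots,\alpha_m\}\subset K$ and $B=\{\beta_1,\dots,\beta_n\}\subset K$ finite sets with $|A|=m$, $|B|=n$, and $f=\prod_{i=1}^m(x-\alpha_i)$. Let $0\le d\le n-1$ and suppose $m\le d$. Then $$\operatorname{Syl}_{0,d}(A,B)=\begin{cases}0 & \text{if } m<d<n-1,\\ (-1)^{(m-d)(n-d)}\,f & \text{if } m<d=n-1 \text{ or } m=d\le n-1.\end{cases}$$
   Context: For finite sets $Y,Z$ of elements or indeterminates, $\mathcal{R}(Y,Z):=\prod_{y\in Y,z\in Z}(y-z)$, with $\mathcal{R}(Y,Z)=1$ if $Y$ or $Z$ is empty; for a single variable $x$, $\mathcal{R}(x,Z):=\mathcal{R}(\{x\},Z)$. For $0\le p\le m$, $0\le q\le n$, Sylvester's double sum is the polynomial in $x$ $$\operatorname{Syl}_{p,q}(A,B)(x):=\sum_{\substack{A'\subset A,\ B'\subset B\\ |A'|=p,\ |B'|=q}}\mathcal{R}(A',B')\,\mathcal{R}(A\setminus A',B\setminus B')\,\frac{\mathcal{R}(x,A')\,\mathcal{R}(x,B')}{\mathcal{R}(A',A\setminus A')\,\mathcal{R}(B',B\setminus B')}.$$ *)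

From mathcomp Require Import all_boot all_order all_algebra.
Set Implicit Arguments. Unset Strict Implicit. Unset Printing Implicit Defensive.
Import GRing.Theory.
Local Open Scope ring_scope.

(* The finite sets A = {a_0,...,a_(m-1)} and B = {b_0,...,b_(n-1)} are given by
   injective enumerations a : 'I_m -> K and b : 'I_n -> K; subsets A' of A are
   represented by subsets S : {set 'I_m} of indices. *)

Definition resR (K : fieldType) (m n : nat) (a : 'I_m -> K) (b : 'I_n -> K)
  (S : {set 'I_m}) (T : {set 'I_n}) : K :=
  \prod_(i in S) \prod_(j in T) (a i - b j).

Definition resX (K : fieldType) (m : nat) (a : 'I_m -> K) (S : {set 'I_m})
  : {poly K} := \prod_(i in S) ('X - (a i)%:P).

Definition Syl (K : fieldType) (m n : nat) (p q : nat)
  (a : 'I_m -> K) (b : 'I_n -> K) : {poly K} :=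
  \sum_(S : {set 'I_m} | #|S| == p) \sum_(T : {set 'I_n} | #|T| == q)
    ((resR a b S T * resR a b (~: S) (~: T))
       / (resR a a S (~: S) * resR b b T (~: T)))
    *: (resX a S * resX b T).

(* Complementing the subset of B turns Syl_{0,d}(A,B) into (-1)^(m(n-d)) F_{n-d}(B),
   where F_k(S) sums, over the k-subsets U of S,
     prod_{u in U} f(b_u) / prod_{t in S\U, u in U} (b_t - b_u) * prod_{t in S\U} (x - b_t);
   F_1(S) is Lagrange interpolation of f on the nodes of S, up to sign.
   At a node b_s the terms with s outside U vanish, and the others add up to
   f(b_s) times the coefficient of x^(|S|-k) in F_(k-1)(S\{s}), known by induction
   on |S|.  So F_k(S) minus the claimed multiple of f has degree < |S| and
   vanishes at the |S| nodes, hence is 0. *)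
From mathcomp Require Import all_boot all_order all_algebra.
From mathcomp Require Import ring zify.
Set Implicit Arguments. Unset Strict Implicit. Unset Printing Implicit Defensive.
Import GRing.Theory.
Local Open Scope ring_scope.

Section LagrangeDoubleSum.
Variables (K : fieldType) (I : finType) (b : I -> K) (f : {poly K}).

Definition node_poly (S : {set I}) : {poly K} := \prod_(t in S) ('X - (b t)%:P).

Definition weight (S U : {set I}) : K :=
  (\prod_(u in U) f.[b u]) / \prod_(t in S :\: U) \prod_(u in U) (b t - b u).

Definition Fsum (S : {set I}) (k : nat) : {poly K} :=
  \sum_(U : {set I} | (U \subset S) && (#|U| == k)) weight S U *: node_poly (S :\: U).

Definition weight_sum (S : {set I}) (k : nat) : K :=
  \sum_(U : {set I} | (U \subset S) && (#|U| == k)) weight S U.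

Lemma size_node_poly (S : {set I}) : size (node_poly S) = #|S|.+1.
Proof. by rewrite /node_poly -big_enum size_prod_XsubC cardE. Qed.

Lemma node_poly_monic (S : {set I}) : node_poly S \is monic.
Proof. exact: monic_prod_XsubC. Qed.

Lemma size_Fsum (S : {set I}) k : (size (Fsum S k) <= (#|S| - k).+1)%N.
Proof.
apply: (big_ind (fun p : {poly K} => size p <= (#|S| - k).+1)%N).
- by rewrite size_poly0.
- by move=> p q hp hq; apply: leq_trans (size_polyD _ _) _; rewrite geq_max hp hq.
move=> U /andP[sUS /eqP cU]; apply: leq_trans (size_scale_leq _ _) _.
by rewrite size_node_poly cardsDS // cU.
Qed.

Lemma coef_Fsum (S : {set I}) k : (Fsum S k)`_(#|S| - k) = weight_sum S k.
Proof.
rewrite coef_sum; apply: eq_bigr => U /andP[sUS /eqP cU].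
have := monicP (node_poly_monic (S :\: U)).
by rewrite coefZ /lead_coef size_node_poly cardsDS // cU /= => ->; rewrite mulr1.
Qed.

Lemma weight_sum0 (S : {set I}) : weight_sum S 0 = 1.
Proof.
rewrite /weight_sum (big_pred1 set0) => [|U]; last first.
  by rewrite cards_eq0 andb_idl // => /eqP ->; rewrite sub0set.
by rewrite /weight big_set0 big1 ?divr1 // => t _; rewrite big_set0.
Qed.

Lemma sum_subsets_with (R : nmodType) (F : {set I} -> R) (S : {set I}) s k :
  s \in S -> (0 < k)%N ->
  \sum_(U : {set I} | (U \subset S) && (#|U| == k) && (s \in U)) F U =
  \sum_(j : {set I} | (j \subset S :\ s) && (#|j| == k.-1)) F (s |: j).
Proof.
move=> sS k0; rewrite (reindex_onto (fun j => s |: j) (fun U => U :\ s)) /=; last first.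
  by move=> U /andP[_ sU]; rewrite setD1K.
apply: eq_bigl => j; rewrite setU11 andbT.
have [sj|sNj] := boolP (s \in j).
  rewrite subsetD1 sj (_ : (s |: j) :\ s == j = false) ?andbF //.
  by apply: contraTF sj => /eqP <-; rewrite setD11.
rewrite setU1K // eqxx andbT cardsU1 sNj add1n -{1}(prednK k0) eqSS.
by rewrite subUset sub1set sS subsetD1 sNj andbT.
Qed.

Hypothesis inj_b : injective b.

Lemma horner_Fsum_term (S j : {set I}) (s : I) : s \in S -> j \subset S :\ s ->
  (weight S (s |: j) *: node_poly (S :\: (s |: j))).[b s] =
  (-1) ^+ #|S :\ s :\: j| * f.[b s] * weight (S :\ s) j.
Proof.
move=> sS sjS; have sNj : s \notin j by apply: contraTN sS => /(subsetP sjS); rewrite !inE eqxx.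
rewrite /weight -!setDDl hornerZ horner_prod big_setU1 //=.
set D := S :\ s :\: j.
have split_den : \prod_(t in D) \prod_(u in s |: j) (b t - b u) =
    (\prod_(t in D) (b t - b s)) * \prod_(t in D) \prod_(u in j) (b t - b u).
  by rewrite -big_split; apply: eq_bigr => t _; rewrite big_setU1.
have eval_nodes : \prod_(t in D) ('X - (b t)%:P).[b s] =
    (-1) ^+ #|D| * \prod_(t in D) (b t - b s).
  by rewrite -prodrN; apply: eq_bigr => t _; rewrite hornerXsubC opprB.
rewrite split_den eval_nodes.
set Q := \prod_(t in D) (b t - b s); set R := \prod_(t in D) \prod_(u in j) _.
have Q0 : Q != 0.
  apply/prodf_neq0 => t; rewrite !inE => /andP[_ /andP[ts _]].
  by rewrite subr_eq0; apply: contra ts => /eqP /inj_b ->.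
have [->|R0] := eqVneq R 0; first by rewrite !(mulr0, invr0, mul0r).
by field; rewrite Q0 R0.
Qed.

Lemma horner_Fsum (S : {set I}) k s : s \in S -> (0 < k)%N ->
  (Fsum S k).[b s] = (-1) ^+ (#|S| - k) * f.[b s] * weight_sum (S :\ s) k.-1.
Proof.
move=> sS k0; rewrite horner_sum (bigID (fun U : {set I} => s \in U)) /=.
rewrite [X in _ + X]big1 ?addr0 => [|U /andP[_ sNU]]; last first.
  by rewrite hornerZ horner_prod (bigD1 s) ?inE ?sNU ?sS //= hornerXsubC subrr mul0r mulr0.
rewrite sum_subsets_with // /weight_sum mulr_sumr; apply: eq_bigr => j /andP[sjS /eqP cj].
rewrite horner_Fsum_term // cardsDS // cj (cardsD1 s S) sS add1n.
by rewrite -{2}(prednK k0) subSS.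
Qed.

Lemma poly_eq0_on_nodes (S : {set I}) (p : {poly K}) : (size p <= #|S|)%N ->
  {in S, forall s, p.[b s] = 0} -> p = 0.
Proof.
move=> sz p0; apply: (@roots_geq_poly_eq0 _ _ [seq b s | s <- enum S]).
- by apply/allP => x /mapP[s]; rewrite mem_enum => sS ->; apply/eqP/p0.
- by rewrite map_inj_uniq // enum_uniq.
by rewrite size_map -cardE.
Qed.

Variable m : nat.
Hypotheses (f_monic : f \is monic) (size_f : size f = m.+1).

Definition Fsum_const (N k : nat) : K :=
  if (m + k == N)%N then (-1) ^+ (m * k) else if k == 1%N then (-1) ^+ N.-1 else 0.

Lemma Fsum_const_rec N k : (0 < k)%N -> (m + k <= N.+1)%N ->
  (-1) ^+ (N.+1 - k) *
    (if k == 1%N then 1 else (Fsum_const N k.-1 *: f)`_(N - k.-1)) =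
  Fsum_const N.+1 k.
Proof.
rewrite /Fsum_const; case: k => [|[|j]] //= _ le_mkN.
  by rewrite addn1 eqSS subn1 mulr1 muln1; case: eqP => [->|].
rewrite coefZ addnS eqSS !addnS; case: eqP => [e|ne].
  have -> : f`_(N - j.+1) = 1.
    by rewrite (_ : N - j.+1 = m)%N; [move/monicP: f_monic; rewrite /lead_coef size_f | lia].
  by rewrite e eqxx mulr1 -exprD (_ : N.+1 - j.+2 = m)%N ?mulnS //; lia.
rewrite nth_default ?size_f ?mulr0 ?mul0r; last by lia.
by case: eqP => // e; exfalso; lia.
Qed.

Lemma FsumE (S : {set I}) k : (0 < k)%N -> (m + k <= #|S|)%N ->
  Fsum S k = Fsum_const #|S| k *: f.
Proof.
move eN : #|S| => N; elim: N S k eN => [|N IH] S k cS k0 le_mkN; first by lia.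
apply/eqP; rewrite -subr_eq0; apply/eqP; apply: (@poly_eq0_on_nodes S).
  apply: leq_trans (size_polyD _ _) _; rewrite size_polyN geq_max cS.
  apply/andP; split; first by apply: leq_trans (size_Fsum _ _) _; rewrite cS; lia.
  by apply: leq_trans (size_scale_leq _ _) _; rewrite size_f; lia.
move=> s sS; rewrite hornerD hornerN hornerZ horner_Fsum // cS.
have cS' : #|S :\ s| = N by move: cS; rewrite (cardsD1 s S) sS add1n => -[].
have lead : weight_sum (S :\ s) k.-1 =
    if k == 1%N then 1 else (Fsum_const N k.-1 *: f)`_(N - k.-1).
  case: eqP => [->|k1]; first exact: weight_sum0.
  by rewrite -coef_Fsum cS' IH //; lia.
by rewrite -mulrA mulrCA lead Fsum_const_rec // mulrC subrr.
Qed.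

End LagrangeDoubleSum.

Lemma Syl0E (K : fieldType) (m n : nat) (a : 'I_m -> K) (b : 'I_n -> K) d :
  (d <= n)%N ->
  Syl 0 d a b =
    (-1) ^+ (m * (n - d)) *: Fsum b (\prod_(i < m) ('X - (a i)%:P)) setT (n - d).
Proof.
move=> dn; set f := \prod_(i < m) _.
have cardC_eq (U : {set 'I_n}) : (#|~: U| == d) = (#|U| == n - d)%N.
  by have := cardsC U; rewrite card_ord => cU; apply/eqP/eqP; lia.
rewrite /Syl (big_pred1 set0) => [|S]; last by rewrite cards_eq0.
rewrite (reindex_inj (@setC_inj _)) /= /Fsum scaler_sumr.
apply: eq_big => [U|U]; first by rewrite subsetT cardC_eq.
rewrite cardC_eq => /eqP cU.
rewrite /resR /resX !big_set0 setC0 setCK !mul1r /weight setTD scalerA.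
congr (_ *: _); rewrite exchange_big /=.
have -> : \prod_(j in U) \prod_(i in [set: 'I_m]) (a i - b j) =
    \prod_(j in U) ((-1) ^+ m * f.[b j]).
  apply: eq_bigr => j _; rewrite horner_prod -[m in (-1) ^+ m]card_ord -prodrN.
  by apply: eq_big => [i|i _]; rewrite ?inE // hornerXsubC opprB.
by rewrite big_split /= prodr_const -exprM cU; ring.
Qed.

Lemma signr_subz (R : unitRingType) (m d n : nat) : (m <= d)%N -> (d <= n)%N ->
  (-1 : R) ^ ((m%:Z - d%:Z) * (n%:Z - d%:Z)) = (-1) ^+ ((d - m) * (n - d)).
Proof.
by move=> md dn; rewrite -opprB !subzn // mulNr -PoszM -exprnN -exprVn invrN1.
Qed.

Theorem corollary2p6 (K : fieldType) (m n : nat)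
    (a : 'I_m -> K) (b : 'I_n -> K)
    (inj_a : injective a) (inj_b : injective b) (d : nat)
    (hdn : (d <= n.-1)%N) (hn : (0 < n)%N) (hmd : (m <= d)%N) :
  let f := \prod_(i < m) ('X - (a i)%:P) in
  ((m < d)%N && (d < n.-1)%N -> Syl 0 d a b = 0) /\
  (((m < d)%N && (d == n.-1)) || (m == d) ->
     Syl 0 d a b = ((-1 : K) ^ ((m%:Z - d%:Z) * (n%:Z - d%:Z))) *: f).
Proof.
move=> f.
have size_f : size f = m.+1 by rewrite size_prod_XsubC -[in RHS](card_ord m) cardT enumT.
have Syl_f : Syl 0 d a b = ((-1) ^+ (m * (n - d)) * Fsum_const K m n (n - d)) *: f.
  have f_monic : f \is monic by apply: monic_prod_XsubC.
  rewrite Syl0E -/f ?(FsumE inj_b f_monic size_f) ?cardsT ?card_ord ?scalerA //; lia.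
rewrite Syl_f signr_subz //; last by lia.
rewrite /Fsum_const; split=> [/andP[md dn1]|].
  by rewrite ifN_eq ?ifN_eq ?mulr0 ?scale0r //; lia.
case/orP=> [/andP[md /eqP dn1]|/eqP md].
  rewrite ifN_eq; last by lia.
  rewrite (_ : n - d = 1)%N ?eqxx -?exprD; last by lia.
  by congr (_ *: _); rewrite -signr_odd -[RHS]signr_odd !muln1 oddD oddB // -dn1 addbC.
subst d; rewrite subnKC ?eqxx -?exprD ?subnn; last by lia.
by rewrite -signr_odd oddD addbb.
Qed.
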